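(* Let $p$ be a prime, $S$ a ring of characteristic $p$, and $S[y]$ the polynomial ring in one variable over $S$. For every $f\in S[y]$, writing $f'$ for its formal derivative, $(f')^pS[y]\subset S[y^p,f]$. *)

From HB Require Import structures.
From mathcomp Require Import all_boot all_order all_algebra.
Set Implicit Arguments. Unset Strict Implicit. Unset Printing Implicit Defensive.
Import GRing.Theory.
Local Open Scope ring_scope.

(* The S-subalgebra S[y^p, f] of S[y]: all Q(y^p, f) for a bivariate
   polynomial Q with coefficients in S.  Q is a polynomial in the second
   variable (substituted by f) whose coefficients are polynomials in the
   first variable (substituted by y^p, i.e. composed with 'X^p). *)
Definition in_Sypf (S : comNzRingType) (p : nat) (f h : {poly S}) : Prop :=
  exists Q : {poly {poly S}},
    h = (map_poly (fun c : {poly S} => c \Po 'X^p) Q).[f].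

From HB Require Import structures.
From mathcomp Require Import all_boot all_order all_algebra zify.
Import GRing.Theory.
Local Open Scope ring_scope.

(* Let x be the outer variable of S[y][x].  By the factor theorem,
   f(x) - f(y) = q (x - y) with q(y, y) = f'(y), hence
   (f(x) - f(y))^(p-1) = f'(y)^(p-1) (x - y)^(p-1) + K (x - y)^p, and
   (x - y)^p = x^p - y^p in characteristic p.  The S[y]-linear map [sift p r]
   sending x^n to y^(n-r) if n = r mod p and to 0 otherwise kills multiples of
   x^p - y^p, and maps (x - y)^(p-1) to y^i for r = p-1-i, because
   (-1)^i C(p-1, i) = 1 mod p.  Applied to the binomial expansion of
   (f(x) - f(y))^(p-1) it lands in S[y^p, f], so f'^(p-1) y^i is in S[y^p, f]
   for all i < p, and therefore f'^(p-1) S[y] is contained in S[y^p, f]. *)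

Section SypfClosure.
Variables (S : comNzRingType) (p : nat) (f : {poly S}).

Lemma in_Sypf_comp c : in_Sypf p f (c \Po 'X^p).
Proof. by exists c%:P; rewrite map_polyC hornerC. Qed.

Lemma in_SypfC c : in_Sypf p f c%:P.
Proof. by rewrite -(comp_polyC c 'X^p); apply: in_Sypf_comp. Qed.

Lemma in_Sypf_self : in_Sypf p f f.
Proof. by exists 'X; rewrite map_polyX hornerX. Qed.

Lemma in_SypfD a b : in_Sypf p f a -> in_Sypf p f b -> in_Sypf p f (a + b).
Proof. by move=> [Qa ->] [Qb ->]; exists (Qa + Qb); rewrite raddfD hornerD. Qed.

Lemma in_SypfN a : in_Sypf p f a -> in_Sypf p f (- a).
Proof. by move=> [Q ->]; exists (- Q); rewrite raddfN hornerN. Qed.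

Lemma in_SypfM a b : in_Sypf p f a -> in_Sypf p f b -> in_Sypf p f (a * b).
Proof.
by move=> [Qa ->] [Qb ->]; exists (Qa * Qb); rewrite rmorphM hornerM.
Qed.

Lemma in_SypfMn a n : in_Sypf p f a -> in_Sypf p f (a *+ n).
Proof. by move=> [Q ->]; exists (Q *+ n); rewrite raddfMn hornerMn. Qed.

Lemma in_SypfX a n : in_Sypf p f a -> in_Sypf p f (a ^+ n).
Proof. by move=> [Q ->]; exists (Q ^+ n); rewrite rmorphXn horner_exp. Qed.

Lemma in_Sypf_Xnp m : in_Sypf p f 'X^(m * p).
Proof.
by rewrite mulnC exprM -(comp_polyX 'X^p); apply/in_SypfX/in_Sypf_comp.
Qed.

Lemma in_Sypf_sum (I : Type) (r : seq I) (P : pred I) (F : I -> {poly S}) :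
  (forall i, P i -> in_Sypf p f (F i)) -> in_Sypf p f (\sum_(i <- r | P i) F i).
Proof. by apply: big_ind => //; [apply: (in_SypfC 0) | apply: in_SypfD]. Qed.

End SypfClosure.

Section Sift.
Variables (S : comNzRingType) (p r : nat).

Definition sift (Q : {poly {poly S}}) : {poly S} :=
  \sum_(n < size Q | (n %% p == r)%N) Q`_n * 'X^(n %/ p * p)%N.

Lemma sift_widen N (Q : {poly {poly S}}) : (size Q <= N)%N ->
  sift Q = \sum_(n < N | (n %% p == r)%N) Q`_n * 'X^(n %/ p * p)%N.
Proof.
move=> leQN; rewrite /sift (big_ord_widen_cond N (fun n => n %% p == r)%N
  (fun n => Q`_n * 'X^(n %/ p * p)%N) leQN) big_mkcondr /=.
by apply: eq_bigr => n _; case: ltnP => // /(nth_default 0) ->; rewrite mul0r.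
Qed.

Fact sift_is_zmod_morphism : zmod_morphism sift.
Proof.
move=> Q1 Q2; have le1 := leq_maxl (size Q1) (size Q2).
have le2 := leq_maxr (size Q1) (size Q2).
have le12 : (size (Q1 - Q2)%R <= maxn (size Q1) (size Q2))%N.
  by rewrite (leq_trans (size_polyD _ _)) // size_polyN.
rewrite !(sift_widen _ _ le1, sift_widen _ _ le2, sift_widen _ _ le12) -sumrB.
by apply: eq_bigr => n _; rewrite coefB mulrBl.
Qed.

HB.instance Definition _ :=
  GRing.isZmodMorphism.Build {poly {poly S}} {poly S} sift
    sift_is_zmod_morphism.

Lemma siftCM c Q : sift (c%:P * Q) = c * sift Q.
Proof.
rewrite mul_polyC (sift_widen _ _ (size_scale_leq c Q)) /sift mulr_sumr.
by apply: eq_bigr => n _; rewrite coefZ mulrA.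
Qed.

Lemma sift_Xn n : sift ('X^n : {poly {poly S}}) =
  if (n %% p == r)%N then 'X^(n %/ p * p) else 0.
Proof.
rewrite (sift_widen n.+1) ?size_polyXn // (big_mkcond (fun i : 'I_n.+1 => _)).
rewrite big_ord_recr /= big1 ?add0r => [|i _].
  by rewrite coefXn eqxx mul1r.
by rewrite coefXn (ltn_eqF (ltn_ord i)) mul0r if_same.
Qed.

Lemma sift_XpM Q : (0 < p)%N -> sift ('X^p * Q) = 'X^p * sift Q.
Proof.
move=> p_gt0; have leN : (size ('X^p * Q)%R <= p + size Q)%N.
  by rewrite (leq_trans (size_polyMleq _ _)) // size_polyXn addSn.
rewrite (sift_widen _ _ leN) big_split_ord /= big1 ?add0r; last first.
  by move=> j _; rewrite coefXnM ltn_ord mul0r.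
rewrite /sift mulr_sumr; apply: eq_big => [j|j _]; first by rewrite modnDl.
rewrite coefXnM ltnNge leq_addr /= addKn mulrCA -exprD; congr (_ * 'X^_).
by rewrite divnDl ?dvdnn // divnn p_gt0 mulnDl mul1n addnC.
Qed.

Lemma sift_mul_XpsubXp Q : (0 < p)%N -> sift (Q * ('X^p - ('X^p)%:P)) = 0.
Proof.
move=> p_gt0; rewrite mulrBr raddfB /= ![Q * _]mulrC.
by rewrite sift_XpM // siftCM subrr.
Qed.

End Sift.

Arguments sift {S} p r Q.

Lemma sign_binom_pred_pchar (R : nzRingType) p i :
  p \in [pchar R] -> (i < p)%N -> (-1) ^+ i *+ 'C(p.-1, i) = 1 :> R.
Proof.
move=> charR; have p_prime := pcharf_prime charR.
have p_gt0 := prime_gt0 p_prime.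
elim: i => [|i IHi] lt_ip; first by rewrite bin0 expr0.
have : 'C(p, i.+1)%:R = 0 :> R.
  by apply/eqP; rewrite -(dvdn_pcharf charR) prime_dvd_bin.
rewrite -{1}(prednK p_gt0) binS natrD => /eqP; rewrite addr_eq0 => /eqP binE.
by rewrite -mulr_natr binE exprS mulrN mulN1r mulNr opprK mulr_natr IHi // ltnW.
Qed.

Lemma XsubC_expp_pchar (R : comNzRingType) p (c : R) :
  p \in [pchar R] -> ('X - c%:P) ^+ p = 'X^p - (c ^+ p)%:P.
Proof.
move=> charR; have charRX : p \in [pchar {poly R}] by rewrite pchar_poly.
rewrite -(pFrobenius_autE charRX) pFrobenius_autB_comm; last exact: mulrC.
by rewrite !pFrobenius_autE rmorphXn.
Qed.

Lemma sift_XsubC_exp (S : comNzRingType) p i (c : {poly S}) :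
  p \in [pchar S] -> (i < p)%N ->
  sift p (p.-1 - i) (('X - c%:P) ^+ p.-1) = c ^+ i.
Proof.
move=> charS lt_ip; have p_gt0 := prime_gt0 (pcharf_prime charS).
have sift_term k : (k < p)%N ->
    sift p (p.-1 - i) ((-1) ^+ k * 'X^(p.-1 - k) * c%:P ^+ k)
    = if k == i then (-1) ^+ k * c ^+ k else 0.
  move=> lt_kp; have -> : (-1) ^+ k * 'X^(p.-1 - k) * c%:P ^+ k
      = ((-1) ^+ k * c ^+ k)%:P * 'X^(p.-1 - k).
    by rewrite mulrAC rmorphM rmorphXn rmorphN1 rmorphXn.
  rewrite siftCM sift_Xn modn_small ?divn_small; try lia.
  have [->|ne_ki] := eqVneq k i; first by rewrite eqxx mul0n expr0 mulr1.
  by rewrite ifF ?mulr0 //; apply/eqP; lia.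
have lt_i_p1 : (i < p.-1.+1)%N by rewrite prednK.
rewrite exprBn raddf_sum /= (bigD1 (Ordinal lt_i_p1)) //= big1 ?addr0.
  rewrite raddfMn /= sift_term // eqxx -mulrnAl.
  by rewrite sign_binom_pred_pchar ?mul1r ?pchar_poly.
move=> [k lt_k]; rewrite -val_eqE /= => /negbTE ne_ki.
have lt_kp : (k < p)%N by rewrite prednK in lt_k.
by rewrite raddfMn /= sift_term // ne_ki mul0rn.
Qed.

Lemma difference_quotient (R : comNzRingType) (g : {poly R}) :
  exists2 q : {poly {poly R}},
    map_poly polyC g - g%:P = q * ('X - 'X%:P) & q.['X] = g^`().
Proof.
have /factor_theorem[q gE] : root (map_poly polyC g - g%:P) 'X.
  by rewrite /root hornerD hornerN hornerC -/(g \Po 'X) comp_polyXr subrr.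
exists q => //; have := congr1 (fun Q => Q^`().['X]) gE => /=.
rewrite derivB derivC subr0 deriv_map derivM derivXsubC mulr1 hornerD hornerM.
by rewrite hornerXsubC subrr mulr0 add0r -/(g^`() \Po 'X) comp_polyXr => <-.
Qed.

Section SiftSypf.
Variables (S : comNzRingType) (p : nat) (f : {poly S}).

Lemma in_Sypf_sift_map_polyC r g : in_Sypf p f (sift p r (map_poly polyC g)).
Proof.
apply: in_Sypf_sum => n _; rewrite coef_map /=.
by apply: in_SypfM; [apply: in_SypfC | apply: in_Sypf_Xnp].
Qed.

Lemma in_Sypf_sift_exp r n :
  in_Sypf p f (sift p r ((map_poly polyC f - f%:P) ^+ n)).
Proof.
rewrite exprBn raddf_sum /=; apply: in_Sypf_sum => k _; rewrite raddfMn /=.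
have -> : (-1) ^+ k * f^:P ^+ (n - k) * f%:P ^+ k
    = ((- f) ^+ k)%:P * map_poly polyC (f ^+ (n - k)).
  by rewrite mulrAC [(- f) ^+ k]exprNn !rmorphM !rmorphXn rmorphN1.
rewrite siftCM; apply/in_SypfMn/in_SypfM; last exact: in_Sypf_sift_map_polyC.
exact/in_SypfX/in_SypfN/in_Sypf_self.
Qed.

End SiftSypf.

Section DerivativePower.
Variables (S : comNzRingType) (p : nat) (f : {poly S}).
Hypothesis charS : p \in [pchar S].
Let p_gt0 : (0 < p)%N := prime_gt0 (pcharf_prime charS).

Lemma in_Sypf_deriv_mulX i : (i < p)%N -> in_Sypf p f (f^`() ^+ p.-1 * 'X^i).
Proof.
move=> lt_ip; have [q fE qE] := difference_quotient _ f.
have [K qpE] : exists K, q ^+ p.-1 = (f^`() ^+ p.-1)%:P + K * ('X - 'X%:P).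
  have /factor_theorem[K KE] : root (q ^+ p.-1 - (f^`() ^+ p.-1)%:P) 'X.
    by rewrite /root hornerD hornerN horner_exp qE hornerC subrr.
  by exists K; rewrite -KE addrC subrK.
have diffE : (map_poly polyC f - f%:P) ^+ p.-1
    = (f^`() ^+ p.-1)%:P * ('X - 'X%:P) ^+ p.-1 + K * ('X^p - ('X^p)%:P).
  rewrite fE exprMn qpE mulrDl -mulrA -exprS prednK //.
  by rewrite [_ ^+ p]XsubC_expp_pchar ?pchar_poly.
have := in_Sypf_sift_exp _ p f (p.-1 - i) p.-1.
by rewrite diffE raddfD /= siftCM sift_XsubC_exp // sift_mul_XpsubXp // addr0.
Qed.

Lemma in_Sypf_deriv_mul h : in_Sypf p f (f^`() ^+ p.-1 * h).
Proof.
rewrite -[h]coefK poly_def mulr_sumr; apply: in_Sypf_sum => n _.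
rewrite -scalerAr -mul_polyC (divn_eq n p) exprD [f^`() ^+ _ * _]mulrCA.
apply/in_SypfM/in_SypfM; [exact: in_SypfC | exact: in_Sypf_Xnp |].
by apply: in_Sypf_deriv_mulX; rewrite ltn_mod.
Qed.

End DerivativePower.

Theorem theorem6p10 (p : nat) (S : comNzRingType) (pr_p : prime p)
  (charS : p \in [pchar S]) (f g : {poly S}) :
  in_Sypf p f ((f^`()) ^+ p * g).
Proof.
rewrite -[in f^`() ^+ p](prednK (prime_gt0 pr_p)) exprSr -mulrA.
exact: in_Sypf_deriv_mul.
Qed.
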